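(* Let $C_1$ and $C_2$ be finite order SISO deterministic programs, both with uniformly distributed secret input, with output distribution vectors $\mathbf{p}_N$ and $\mathbf{p}'_N$ and output sets $\mathcal{O}_N$ and $\mathcal{O}'_N$ respectively. Assume $|\mathcal{O}'_N|\ge 2$ for all sufficiently large $N$. For $\alpha\in(0,\infty]$ let $$f_\alpha=\limsup_{N\to\infty}\frac{IL_\alpha(C_1,N)}{IL_\alpha(C_2,N)},\qquad g_\alpha=\liminf_{N\to\infty}\frac{IL_\alpha(C_1,N)}{IL_\alpha(C_2,N)}.$$ Then, with $\alpha,\beta$ ranging over $(0,\infty]$: 1. (a) $f_\alpha=0$ for some $\alpha$ if and only if $f_\beta=0$ for all $\beta$. (b) $f_\alpha=\infty$ for some $\alpha$ if and only if $f_\beta=\infty$ for all $\beta$. (c) $0<f_\alpha<\infty$ for some $\alpha$ if and only if $0<f_\beta<\infty$ for all $\beta$. 2. (a) $g_\alpha=0$ for some $\alpha$ if and only if $g_\beta=0$ for all $\beta$. (b) $g_\alpha=\infty$ for some $\alpha$ if and only if $g_\beta=\infty$ for all $\beta$. (c) $0<g_\alpha<\infty$ for some $\alpha$ if and only if $0<g_\beta<\infty$ for all $\beta$.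
   Context: A SISO deterministic program $C$ is a family indexed by $N\in\mathbb{N}^+$: for each $N$, a random variable $A$ uniformly distributed on $\mathcal{A}_N=\{0,1,\dots,N-1\}$, and a surjective map $F_N$ from $\mathcal{A}_N$ onto a finite set $\mathcal{O}_N$. The output is $O=F_N(A)$, and $\mathbf{p}_N$ denotes its distribution vector, so $\mathbf{p}_N(o)=|F_N^{-1}(o)|/N$. $C$ is of finite order if $\sup_N\|\mathbf{p}_N\|_0<\infty$, where $\|\mathbf{p}\|_0$ is the number of nonzero entries of $\mathbf{p}$. For a probability vector $\mathbf{p}$ and $\alpha\in(0,\infty]$, the Rényi entropy is $H_\alpha(\mathbf{p})=\frac{1}{1-\alpha}\log\sum_i p_i^\alpha$ for $\alpha\notin\{1,\infty\}$. The limiting cases are $H_1(\mathbf{p})=-\sum_i p_i\log p_i$ and $H_\infty(\mathbf{p})=-\log\max_i p_i$. The $\alpha$-information leakage is $IL_\alpha(C,N)=H_\alpha(\mathbf{p}_N)$. Both programs are evaluated at the same $N$. *)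

From HB Require Import structures.
From mathcomp Require Import all_boot all_order all_algebra.
From mathcomp Require Import all_classical all_reals.
From mathcomp Require Import topology normedtype sequences exp.
Set Implicit Arguments. Unset Strict Implicit. Unset Printing Implicit Defensive.
Import Order.TTheory GRing.Theory Num.Theory.
Local Open Scope ring_scope.

Section Leakage.
Variable R : realType.

(* Output distribution of F_N : 'I_N -> O with A uniform on {0,..,N-1}:
   p_N(o) = |F_N^{-1}(o)| / N. *)
Definition out_dist (N : nat) (O : finType) (F : 'I_N -> O) (o : O) : R :=
  #|[set a | F a == o]|%:R / N%:R.

Definition supp_size (O : finType) (p : O -> R) : nat :=
  #|[set o | p o != 0]|.

(* Renyi entropy H_alpha(p), alpha : \bar R (meaningful for 0 < alpha <= +oo).
   Natural logarithm (base irrelevant for the ratios considered). *)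
Definition renyi (O : finType) (p : O -> R) (a : \bar R) : R :=
  match a with
  | +oo%E => - ln (\big[Num.max/0]_(o : O) p o)
  | (r%:E)%E => if r == 1 then - \sum_(o : O) p o * ln (p o)
                else (1 - r)^-1 * ln (\sum_(o : O) p o `^ r)
  | -oo%E => 0
  end.

Definition leakage (O : nat -> finType) (F : forall N, 'I_N -> O N)
  (a : \bar R) (N : nat) : R :=
  renyi (out_dist (F N)) a.

Definition siso_program (O : nat -> finType) (F : forall N, 'I_N -> O N) :=
  forall N, (0 < N)%N -> forall o : O N, exists a : 'I_N, F N a = o.

Definition finite_order (O : nat -> finType) (F : forall N, 'I_N -> O N) :=
  exists K : nat, forall N, (0 < N)%N -> (supp_size (out_dist (F N)) <= K)%N.

Definition ratio_limsup (O1 O2 : nat -> finType)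
  (F1 : forall N, 'I_N -> O1 N) (F2 : forall N, 'I_N -> O2 N) (a : \bar R)
  : \bar R :=
  limn_esup (fun N => ((leakage F1 a N / leakage F2 a N)%:E)%E).

Definition ratio_liminf (O1 O2 : nat -> finType)
  (F1 : forall N, 'I_N -> O1 N) (F2 : forall N, 'I_N -> O2 N) (a : \bar R)
  : \bar R :=
  limn_einf (fun N => ((leakage F1 a N / leakage F2 a N)%:E)%E).

Definition order_range (a : \bar R) : Prop := (0 < a)%E.

End Leakage.

From HB Require Import structures.
From mathcomp Require Import all_boot all_order all_algebra.
From mathcomp Require Import all_classical all_reals.
From mathcomp Require Import topology normedtype sequences exp.
From mathcomp Require Import ereal ring lra.
Import Order.TTheory GRing.Theory Num.Theory.
Local Open Scope ring_scope.

(* Write d = 1 - max p for the mass of a distribution p off its mode. If p has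
   at most K outcomes, then every H_alpha(p) lies between constant multiples
   (depending on K and alpha only) of phi_alpha(d), where phi_alpha(d) is d for
   alpha > 1 or alpha = oo, d^alpha for alpha < 1 and d (1 - ln d) for alpha = 1.
   Consequently the ratio IL_alpha(C1, N) / IL_alpha(C2, N) is bounded below by
   c min(rho_N, rho_N^g) and above by C max(rho_N, rho_N^g), where
   rho_N = d_N / d'_N does not depend on alpha and 0 < g <= 1 does.  Whether
   such a sequence tends to 0 or to oo, eventually or along a subsequence, is
   decided by rho alone; these four properties determine whether the limsup
   and the liminf of the ratio are 0, oo, or finite and positive. *)

Section frequently.
Local Open Scope classical_set_scope.

Definition frequently (P : nat -> Prop) := ~ \forall n \near \oo, ~ P n.

Lemma near_frequently {P : nat -> Prop} :
  (\forall n \near \oo, P n) -> frequently P.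
Proof. by move=> evP evnP; have [n []] := filter_ex (filterI evP evnP). Qed.

Lemma frequentlyS {P Q : nat -> Prop} :
  (forall n, P n -> Q n) -> frequently P -> frequently Q.
Proof. by move=> PQ fP evnQ; apply: fP; apply: filterS evnQ => n nQ /PQ. Qed.

Lemma frequently_andr {P Q : nat -> Prop} :
  frequently P -> (\forall n \near \oo, Q n) -> frequently (fun n => P n /\ Q n).
Proof.
move=> fP evQ evnPQ; apply: fP.
by apply: filterS2 evQ evnPQ => n Qn nPQ Pn; apply: nPQ.
Qed.

Lemma not_frequently {P : nat -> Prop} :
  ~ frequently P -> \forall n \near \oo, ~ P n.
Proof. exact: contrapT. Qed.

End frequently.

Section asymptotic_size.
Local Open Scope classical_set_scope.
Context {R : realType}.
Implicit Types u : nat -> R.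

Definition eventually_small u := forall e, 0 < e -> \forall n \near \oo, u n <= e.
Definition frequently_small u := forall e, 0 < e -> frequently (fun n => u n <= e).
Definition frequently_large u := forall M, frequently (fun n => M <= u n).
Definition eventually_large u := forall M, \forall n \near \oo, M <= u n.

End asymptotic_size.

Section limn_esup_einf_near.
Local Open Scope classical_set_scope.
Context {R : realType}.
Implicit Types (v : (\bar R)^nat) (x : \bar R).
Local Open Scope ereal_scope.

Lemma limn_esup_le_near v x :
  (\forall n \near \oo, v n <= x) -> limn_esup v <= x.
Proof.
case=> n0 _ vx; rewrite /limn_esup limf_esupE.
apply: ge_ereal_inf; exists (ereal_sup (v @` [set n | (n0 <= n)%N])).
  by exists [set n | (n0 <= n)%N] => //; exists n0.
by apply: ge_ereal_sup => _ [n ? <-]; apply: vx.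
Qed.

Lemma limn_esup_lt_near v x :
  limn_esup v < x -> \forall n \near \oo, v n < x.
Proof.
rewrite /limn_esup limf_esupE => /ereal_inf_lt [_ [V [n0 _ n0V] <-]] Vx.
exists n0 => // n n0n; apply: le_lt_trans Vx.
by apply: ereal_sup_ubound; exists n => //; apply: n0V.
Qed.

Lemma frequently_le_limn_esup v x :
  frequently (fun n => x <= v n) -> x <= limn_esup v.
Proof.
move=> fx; rewrite leNgt; apply/negP => /limn_esup_lt_near vx; apply: fx.
by apply: filterS vx => n; rewrite ltNge => /negP.
Qed.

Lemma limn_einf_ge_near v x :
  (\forall n \near \oo, x <= v n) -> x <= limn_einf v.
Proof.
move=> xv; rewrite /limn_einf leeNr; apply: limn_esup_le_near.
by apply: filterS xv => n; rewrite /= leeN2.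
Qed.

Lemma limn_einf_gt_near v x :
  x < limn_einf v -> \forall n \near \oo, x < v n.
Proof.
rewrite /limn_einf lteNr => /limn_esup_lt_near.
by apply: filterS => n; rewrite /= lteN2.
Qed.

Lemma frequently_le_limn_einf v x :
  frequently (fun n => v n <= x) -> limn_einf v <= x.
Proof.
move=> fx; rewrite /limn_einf leeNl; apply: frequently_le_limn_esup.
by apply: frequentlyS fx => n; rewrite /= leeN2.
Qed.

End limn_esup_einf_near.

Section limn_esup_einf_real.
Local Open Scope classical_set_scope.
Context {R : realType}.
Variable u : nat -> R.
Local Notation U := (fun n => (u n)%:E).
Hypothesis u_ge0 : \forall n \near \oo, 0 <= u n.

Lemma limn_esup_ge0 : (0 <= limn_esup U)%E.
Proof.
apply: frequently_le_limn_esup; apply: near_frequently.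
by apply: filterS u_ge0 => n; rewrite lee_fin.
Qed.

Lemma limn_einf_ge0 : (0 <= limn_einf U)%E.
Proof. by apply: limn_einf_ge_near; apply: filterS u_ge0 => n; rewrite lee_fin. Qed.

Lemma limn_esup_eq0 : limn_esup U = 0%E <-> eventually_small u.
Proof.
split=> [U0 e e0|ue].
  have /limn_esup_lt_near : (limn_esup U < e%:E)%E by rewrite U0 lte_fin.
  by apply: filterS => n; rewrite lte_fin => /ltW.
apply: le_anti; rewrite limn_esup_ge0 andbT; apply/lee_addgt0Pr => e e0.
rewrite add0e; apply: limn_esup_le_near.
by apply: filterS (ue e e0) => n; rewrite lee_fin.
Qed.

Lemma limn_einf_eq0 : limn_einf U = 0%E <-> frequently_small u.
Proof.
split=> [U0 e e0|ue].
  apply: contrapT => /not_frequently ne.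
  have : (e%:E <= limn_einf U)%E.
    apply: limn_einf_ge_near; apply: filterS ne => n /negP.
    by rewrite -ltNge lee_fin => /ltW.
  by rewrite U0 lee_fin; lra.
apply: le_anti; rewrite limn_einf_ge0 andbT; apply/lee_addgt0Pr => e e0.
rewrite add0e; apply: frequently_le_limn_einf.
by apply: frequentlyS (ue e e0) => n; rewrite lee_fin.
Qed.

Lemma limn_esup_eqy : limn_esup U = +oo%E <-> frequently_large u.
Proof.
split=> [Uy M|uM]; last first.
  apply: eq_infty => M; apply: frequently_le_limn_esup.
  by apply: frequentlyS (uM M) => n; rewrite lee_fin.
apply: contrapT => /not_frequently nM.
have : (limn_esup U <= M%:E)%E.
  apply: limn_esup_le_near; apply: filterS nM => n /negP.
  by rewrite -ltNge lee_fin => /ltW.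
by rewrite Uy.
Qed.

Lemma limn_einf_eqy : limn_einf U = +oo%E <-> eventually_large u.
Proof.
split=> [Uy M|uM]; last first.
  apply: eq_infty => M; apply: limn_einf_ge_near.
  by apply: filterS (uM M) => n; rewrite lee_fin.
have /limn_einf_gt_near : (M%:E < limn_einf U)%E by rewrite Uy ltry.
by apply: filterS => n; rewrite lte_fin => /ltW.
Qed.

End limn_esup_einf_real.

Section elementary_inequalities.
Context {R : realType}.
Implicit Types x : R.

Lemma ln_le_subr1 {x} : 0 < x -> ln x <= x - 1.
Proof.
move=> x0; have /le_ln1Dx : -1 < x - 1 by lra.
by rewrite addrC subrK.
Qed.

Lemma subr_inv_le_ln {x} : 0 < x -> 1 - x^-1 <= ln x.
Proof.
move=> x0; have xV0 : 0 < x^-1 by rewrite invr_gt0.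
by have := ln_le_subr1 xV0; rewrite lnV ?posrE //; lra.
Qed.

Lemma subr1_le_mul_ln {x} : 0 < x -> x - 1 <= x * ln x.
Proof.
move=> x0; have : x * (1 - x^-1) <= x * ln x by rewrite ler_pM2l ?subr_inv_le_ln.
by rewrite mulrBr mulr1 mulfV ?gt_eqF.
Qed.

Lemma powR_split r {x} : 0 <= x -> x `^ r * x `^ (1 - r) = x.
Proof. by move=> x0; rewrite -powRD addrC subrK ?oner_eq0 ?powRr1. Qed.

Lemma le_powR {a x y} : 0 <= a -> 0 <= x -> x <= y -> x `^ a <= y `^ a.
Proof. by move=> a0 x0 xy; apply: ge0_ler_powR; rewrite ?nnegrE ?(le_trans x0 xy). Qed.

Lemma powR_le1 {a x} : 0 <= a -> 0 <= x -> x <= 1 -> x `^ a <= 1.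
Proof. by move=> a0 x0 x1; have := le_powR a0 x0 x1; rewrite powR1. Qed.

Lemma powR_lt1 {a x} : 0 < a -> 0 <= x < 1 -> x `^ a < 1.
Proof.
move=> a0 /andP[x0 x1]; have := @gt0_ltr_powR _ a a0 x 1.
by rewrite !nnegrE x0 ler01 powR1 => /(_ isT isT x1).
Qed.

End elementary_inequalities.

Section power_envelopes.
Context {R : realType}.
Implicit Types x y : R.
Variable g : R.
Hypothesis g_gt0 : 0 < g.
Hypothesis g_le1 : g <= 1.

Definition minpow x := Num.min x (x `^ g).
Definition maxpow x := Num.max x (x `^ g).

Lemma minpow_ge0 {x} : 0 <= x -> 0 <= minpow x.
Proof. by move=> x0; rewrite /minpow le_min x0 powR_ge0. Qed.

Lemma minpow_gt0 {x} : 0 < x -> 0 < minpow x.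
Proof. by move=> x0; rewrite /minpow lt_min x0 powR_gt0. Qed.

Lemma minpow_ub x : minpow x <= x /\ minpow x <= x `^ g.
Proof. by rewrite /minpow !ge_min !lexx orbT. Qed.

Lemma maxpow_lb x : x <= maxpow x /\ x `^ g <= maxpow x.
Proof. by rewrite /maxpow !le_max !lexx orbT. Qed.

Lemma le_minpow {x y} : 0 <= x -> x <= y -> minpow x <= minpow y.
Proof.
move=> x0 xy; rewrite /minpow le_min !ge_min xy (le_powR (ltW g_gt0) x0 xy).
by rewrite orbT.
Qed.

Lemma le_maxpow {x y} : 0 <= x -> x <= y -> maxpow x <= maxpow y.
Proof.
move=> x0 xy; rewrite /maxpow ge_max !le_max xy (le_powR (ltW g_gt0) x0 xy).
by rewrite orbT.
Qed.

Lemma maxpow_le_powR {x} : 0 <= x <= 1 -> maxpow x <= x `^ g.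
Proof.
move=> /andP[x0 x1]; rewrite /maxpow ge_max lexx andbT.
move: x0; rewrite le_eqVlt => /predU1P[<-|x0]; first exact: powR_ge0.
by apply: ger1_powR; rewrite ?x0 ?g_gt0.
Qed.

Lemma powR_le_minpow {x} : 1 <= x -> x `^ g <= minpow x.
Proof. by move=> x1; rewrite /minpow le_min lexx andbT; apply: ler1_powR. Qed.

Lemma powR_invK {a} : 0 <= a -> (a `^ g^-1) `^ g = a.
Proof. by move=> a0; rewrite -powRrM mulVf ?gt_eqF // powRr1. Qed.

Lemma maxpow_small {C e} : 0 < C -> 0 < e ->
  exists2 eta, 0 < eta & forall x, 0 <= x -> x <= eta -> C * maxpow x <= e.
Proof.
move=> C0 e0; have eC0 : 0 <= e / C by rewrite ltW ?divr_gt0.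
exists (Num.min 1 ((e / C) `^ g^-1)); first by rewrite lt_min ltr01 powR_gt0 ?divr_gt0.
move=> x x0; rewrite le_min => /andP[x1 xeC].
have xg : x `^ g <= e / C by rewrite -(powR_invK eC0); apply: (le_powR (ltW g_gt0)).
rewrite -ler_pdivlMl // mulrC; apply: le_trans xg.
by apply: maxpow_le_powR; rewrite x0.
Qed.

Lemma minpow_small {c e} : 0 < c -> 0 < e ->
  exists2 eta, 0 < eta & forall x, 0 <= x -> c * minpow x <= eta -> x <= e.
Proof.
move=> c0 e0; have ce0 : 0 < c * minpow e by rewrite mulr_gt0 ?minpow_gt0.
exists (c * minpow e / 2); first by rewrite divr_gt0.
move=> x x0 cx; rewrite leNgt; apply/negP => ex.
have : c * minpow e <= c * minpow x by rewrite ler_pM2l // le_minpow // ltW.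
lra.
Qed.

Lemma minpow_large {c} M : 0 < c ->
  exists M', forall x, M' <= x -> M <= c * minpow x.
Proof.
move=> c0; set b := Num.max M 1 / c.
have b0 : 0 < b by rewrite divr_gt0 // lt_max ltr01 orbT.
exists (Num.max 1 (b `^ g^-1)) => x; rewrite ge_max => /andP[x1 xb].
have bx : b <= minpow x.
  have := powR_le_minpow x1; apply: le_trans.
  by rewrite -{1}(powR_invK (ltW b0)); apply: (le_powR (ltW g_gt0)); rewrite ?powR_ge0.
by apply: le_trans (_ : Num.max M 1 <= _); rewrite ?le_max ?lexx // mulrC -ler_pdivrMr.
Qed.

Lemma maxpow_large {C} M : 0 < C ->
  exists M', forall x, 0 <= x -> M' <= C * maxpow x -> M <= x.
Proof.
move=> C0; exists (C * maxpow (Num.max M 0) + 1) => x x0 Cx.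
rewrite leNgt; apply/negP => xM.
have : C * maxpow x <= C * maxpow (Num.max M 0).
  by rewrite ler_pM2l // le_maxpow // le_max ltW.
lra.
Qed.

End power_envelopes.

Lemma ereal_between_0y {R : realType} (x : \bar R) : (0 <= x)%E ->
  (0 < x < +oo)%E <-> x <> 0%E /\ x <> +oo%E.
Proof.
move=> x0; rewrite lt_neqAle ltey x0 andbT; split.
  by move=> /andP[/eqP x_neq0 /eqP x_neqy]; split => // x_eq0; apply: x_neq0.
by move=> [x_neq0 x_neqy]; apply/andP; split; apply/eqP => // x_eq0; apply: x_neq0.
Qed.

Section sandwich.
Local Open Scope classical_set_scope.
Context {R : realType}.

Definition pow_sandwich s rho := exists c C g : R,
  [/\ 0 < c, 0 < C, 0 < g <= 1 &
   \forall n \near \oo, [/\ 0 <= rho n, c * minpow g (rho n) <= s n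
                          & s n <= C * maxpow g (rho n)]].

Context {s rho : nat -> R}.
Hypothesis s_rho : pow_sandwich s rho.

Lemma pow_sandwich_ge0 : \forall n \near \oo, 0 <= s n.
Proof.
have [c [C [g [c0 _ /andP[g0 _] srho]]]] := s_rho.
apply: filterS srho => n [rho0 + _]; apply: le_trans.
by apply: mulr_ge0; [exact: ltW | exact: minpow_ge0].
Qed.

Lemma pow_sandwich_eventually_small : eventually_small s <-> eventually_small rho.
Proof.
have [c [C [g [c0 C0 /andP[g0 g1] srho]]]] := s_rho; split=> small e e0.
  have [eta eta0 etae] := minpow_small g g0 c0 e0.
  apply: filterS2 srho (small _ eta0) => n [rho0 lo _] seta.
  by apply: etae => //; apply: le_trans lo seta.
have [eta eta0 etae] := maxpow_small g g0 g1 C0 e0.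
apply: filterS2 srho (small _ eta0) => n [rho0 _ hi] rhoeta.
by apply: le_trans hi (etae _ rho0 rhoeta).
Qed.

Lemma pow_sandwich_frequently_small : frequently_small s <-> frequently_small rho.
Proof.
have [c [C [g [c0 C0 /andP[g0 g1] srho]]]] := s_rho; split=> small e e0.
  have [eta eta0 etae] := minpow_small g g0 c0 e0.
  apply: frequentlyS (frequently_andr (small _ eta0) srho) => n [seta [rho0 lo _]].
  by apply: etae => //; apply: le_trans lo seta.
have [eta eta0 etae] := maxpow_small g g0 g1 C0 e0.
apply: frequentlyS (frequently_andr (small _ eta0) srho) => n [rhoeta [rho0 _ hi]].
by apply: le_trans hi (etae _ rho0 rhoeta).
Qed.

Lemma pow_sandwich_frequently_large : frequently_large s <-> frequently_large rho.
Proof.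
have [c [C [g [c0 C0 /andP[g0 g1] srho]]]] := s_rho; split=> large M.
  have [M' M'M] := maxpow_large g g0 M C0.
  apply: frequentlyS (frequently_andr (large M') srho) => n [M's [rho0 _ hi]].
  by apply: M'M => //; apply: le_trans M's hi.
have [M' M'M] := minpow_large g g0 g1 M c0.
apply: frequentlyS (frequently_andr (large M') srho) => n [M'rho [rho0 lo _]].
by apply: le_trans (M'M _ M'rho) lo.
Qed.

Lemma pow_sandwich_eventually_large : eventually_large s <-> eventually_large rho.
Proof.
have [c [C [g [c0 C0 /andP[g0 g1] srho]]]] := s_rho; split=> large M.
  have [M' M'M] := maxpow_large g g0 M C0.
  apply: filterS2 srho (large M') => n [rho0 _ hi] M's.
  by apply: M'M => //; apply: le_trans M's hi.
have [M' M'M] := minpow_large g g0 g1 M c0.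
apply: filterS2 srho (large M') => n [rho0 lo _] M'rho.
by apply: le_trans (M'M _ M'rho) lo.
Qed.

Local Notation S := (fun n => (s n)%:E).

Lemma sandwich_limn_esup_eq0 : limn_esup S = 0%E <-> eventually_small rho.
Proof.
rewrite limn_esup_eq0; last exact: pow_sandwich_ge0.
exact: pow_sandwich_eventually_small.
Qed.

Lemma sandwich_limn_esup_eqy : limn_esup S = +oo%E <-> frequently_large rho.
Proof. by rewrite limn_esup_eqy; exact: pow_sandwich_frequently_large. Qed.

Lemma sandwich_limn_esup_fin_gt0 :
  (0 < limn_esup S < +oo)%E <-> ~ eventually_small rho /\ ~ frequently_large rho.
Proof.
rewrite ereal_between_0y; last exact/limn_esup_ge0/pow_sandwich_ge0.
by rewrite sandwich_limn_esup_eq0 sandwich_limn_esup_eqy.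
Qed.

Lemma sandwich_limn_einf_eq0 : limn_einf S = 0%E <-> frequently_small rho.
Proof.
rewrite limn_einf_eq0; last exact: pow_sandwich_ge0.
exact: pow_sandwich_frequently_small.
Qed.

Lemma sandwich_limn_einf_eqy : limn_einf S = +oo%E <-> eventually_large rho.
Proof. by rewrite limn_einf_eqy; exact: pow_sandwich_eventually_large. Qed.

Lemma sandwich_limn_einf_fin_gt0 :
  (0 < limn_einf S < +oo)%E <-> ~ frequently_small rho /\ ~ eventually_large rho.
Proof.
rewrite ereal_between_0y; last exact/limn_einf_ge0/pow_sandwich_ge0.
by rewrite sandwich_limn_einf_eq0 sandwich_limn_einf_eqy.
Qed.

End sandwich.

Section renyi_mode_bounds.
Context {R : realType}.
Variables (O : finType) (p : O -> R) (o : O) (K : nat).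
Hypotheses (p_gt0 : forall x, 0 < p x) (p_sum1 : \sum_x p x = 1)
  (p_mode : forall x, p x <= p o) (card_O : (#|O| <= K)%N).

Let d := 1 - p o.
Let k : R := K%:R.

Lemma sum_off_mode : \sum_(x | x != o) p x = d.
Proof. by rewrite /d -p_sum1 [X in _ = X - _](bigD1 o) //= addrC addrK. Qed.

Lemma le_off_mode {x} : x != o -> p x <= d.
Proof.
by move=> xo; rewrite -sum_off_mode (bigD1 x) //= lerDl sumr_ge0 // => y _; rewrite ltW.
Qed.

Lemma off_mode_ge0 : 0 <= d.
Proof. by rewrite -sum_off_mode sumr_ge0 // => y _; rewrite ltW. Qed.

Lemma mode_le1 : p o <= 1.
Proof. by have := off_mode_ge0; rewrite /d; lra. Qed.

Lemma card_ge1 : 1 <= k.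
Proof. by rewrite /k ler1n; apply: leq_trans card_O; apply/card_gt0P; exists o. Qed.

Lemma sum_card_le (f : O -> R) : (forall x, f x <= 1) -> \sum_x f x <= k.
Proof.
move=> f1; apply: le_trans (ler_sum _ (fun x _ => f1 x)) _.
by rewrite sumr_const -mulr_natl mulr1 /k ler_nat.
Qed.

Lemma sum_off_mode_cst {c} : 0 <= c -> \sum_(x | x != o) c <= k * c.
Proof.
move=> c0; apply: le_trans (_ : \sum_(x : O) c <= _).
  by rewrite [\sum_(x : O) c](bigD1 o) //= lerDr.
by rewrite sumr_const -mulr_natl; apply: ler_wpM2r; rewrite // /k ler_nat.
Qed.

Lemma invk_le_mode : k^-1 <= p o.
Proof.
have k0 : 0 < k by have := card_ge1; lra.
have : 1 <= k * p o.
  rewrite -p_sum1; apply: le_trans (ler_sum _ (fun x _ => p_mode x)) _.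
  rewrite sumr_const -mulr_natl; apply: ler_wpM2r; first exact: ltW.
  by rewrite /k ler_nat.
by rewrite -[k^-1]mulr1 ler_pdivrMl.
Qed.

Lemma off_mode_lt1 : d < 1.
Proof. by have := p_gt0 o; rewrite /d; lra. Qed.

Lemma min_entropy_bounds : d <= - ln (p o) <= k * d.
Proof.
have po0 := p_gt0 o; have poV0 : 0 < (p o)^-1 by rewrite invr_gt0.
have k0 : 0 < k by have := card_ge1; lra.
apply/andP; split; first by have := ln_le_subr1 po0; rewrite /d; lra.
have := ln_le_subr1 poV0; rewrite lnV ?posrE // => /le_trans; apply.
have -> : (p o)^-1 - 1 = d * (p o)^-1 by rewrite /d mulrBl mul1r mulfV ?gt_eqF.
rewrite mulrC ler_wpM2r ?off_mode_ge0 // -[k]invrK lef_pV2 ?posrE ?invr_gt0 //.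
exact: invk_le_mode.
Qed.

Lemma renyi_gt1_bounds r : 1 < r ->
  d <= (1 - r)^-1 * ln (\sum_x p x `^ r) <= r / (r - 1) * k * d.
Proof.
move=> r1; set S := \sum_x p x `^ r; have po0 := p_gt0 o.
have mode_le_S : p o `^ r <= S.
  by rewrite /S (bigD1 o) //= lerDl sumr_ge0 // => x _; rewrite powR_ge0.
have S0 : 0 < S by apply: lt_le_trans mode_le_S; rewrite powR_gt0.
have S_le_mode : S <= p o `^ (r - 1).
  rewrite /S -[p o `^ _]mul1r -{1}p_sum1 mulr_suml; apply: ler_sum => x _.
  rewrite -mulr_powRB1; [|exact: ltW|lra].
  by apply: ler_wpM2l; [exact: ltW | apply: le_powR; [lra | exact: ltW | exact: p_mode]].
have lnS_le : ln S <= (r - 1) * ln (p o) by rewrite -ln_powR ler_ln ?posrE ?powR_gt0.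
have lnS_ge : r * ln (p o) <= ln S by rewrite -ln_powR ler_ln ?posrE ?powR_gt0.
have /andP[d_le k_ge] := min_entropy_bounds.
have -> : (1 - r)^-1 * ln S = - ln S / (r - 1).
  by field; apply/andP; split; apply/eqP; lra.
apply/andP; split; first by rewrite ler_pdivlMr ?subr_gt0 //; nra.
rewrite ler_pdivrMr ?subr_gt0 //.
have -> : r / (r - 1) * k * d * (r - 1) = r * (k * d) by field; apply/eqP; lra.
nra.
Qed.

Lemma powR_off_mode_le_sum {r} : 0 < r < 1 -> d `^ r <= \sum_(x | x != o) p x `^ r.
Proof.
move=> /andP[r0 r1]; have [d0|d0] := eqVneq d 0.
  by rewrite d0 powR0 ?gt_eqF // sumr_ge0 // => x _; rewrite powR_ge0.
have {}d0 : 0 < d by rewrite lt_neqAle eq_sym d0 off_mode_ge0.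
(* equivalent to [(p x / d)^(1-r) <= 1] *)
have termwise x : x != o -> d `^ r * p x <= p x `^ r * d.
  move=> xo; have px0 := p_gt0 x.
  have pd : p x `^ (1 - r) <= d `^ (1 - r).
    by apply: le_powR; [lra | exact: ltW | exact: le_off_mode].
  rewrite -{1}(powR_split r (ltW px0)) -{2}(powR_split r (ltW d0)) [in X in _ <= X]mulrCA.
  by apply: ler_wpM2l; [exact: powR_ge0 | apply: ler_wpM2l; [exact: powR_ge0|]].
have : \sum_(x | x != o) d `^ r * p x <= \sum_(x | x != o) p x `^ r * d.
  exact: ler_sum.
by rewrite -mulr_sumr -mulr_suml sum_off_mode ler_pM2r.
Qed.

Lemma mode_le_powR {r} : 0 < r < 1 -> p o <= p o `^ r.
Proof.
by move=> /andP[_ r1]; apply: ger1_powR; [rewrite p_gt0 mode_le1 | exact: ltW].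
Qed.

Lemma renyi_lt1_le r : 0 < r < 1 ->
  (1 - r)^-1 * ln (\sum_x p x `^ r) <= k / (1 - r) * d `^ r.
Proof.
move=> /andP[r0 r1]; set S := \sum_x p x `^ r.
have S0 : 0 < S.
  by rewrite /S (bigD1 o) //= ltr_wpDr ?sumr_ge0 ?powR_gt0 // => x _; rewrite powR_ge0.
have S_le : S <= 1 + k * d `^ r.
  rewrite /S (bigD1 o) //=; apply: lerD.
    by apply: powR_le1; [exact: ltW | exact: ltW | exact: mode_le1].
  have := sum_off_mode_cst (powR_ge0 d r); apply: le_trans; apply: ler_sum => x xo.
  by apply: le_powR; [exact: ltW | exact: ltW | exact: le_off_mode].
have r'0 : 0 <= (1 - r)^-1 by rewrite invr_ge0; lra.
rewrite [k / _]mulrC -mulrA ler_wpM2l //.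
by apply: le_trans (ln_le_subr1 S0) _; lra.
Qed.

Lemma renyi_lt1_ge r : 0 < r < 1 ->
  (1 - (1 - k^-1) `^ (1 - r)) / (k * (1 - r)) * d `^ r
    <= (1 - r)^-1 * ln (\sum_x p x `^ r).
Proof.
move=> r01; have /andP[r0 r1] := r01; set S := \sum_x p x `^ r.
set w := (1 - k^-1) `^ (1 - r).
have k1 := card_ge1.
have S_ge : 1 - d + d `^ r <= S.
  rewrite /S (bigD1 o) //= lerD ?powR_off_mode_le_sum //.
  by have := mode_le_powR r01; rewrite /d; lra.
have S_le : S <= k.
  apply: sum_card_le => x; apply: powR_le1; [exact: ltW | exact: ltW |].
  exact: le_trans (p_mode x) mode_le1.
(* [d^(1-r) <= w] because the mode has mass at least [1/k] *)
have d_le : d <= d `^ r * w.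
  rewrite -{1}(powR_split r off_mode_ge0) ler_wpM2l ?powR_ge0 //.
  apply: le_powR; [lra | exact: off_mode_ge0 |].
  by rewrite /d lerD2l lerN2 invk_le_mode.
have gap : (1 - w) * d `^ r <= S - 1 by rewrite mulrBl mul1r [w * _]mulrC; lra.
have kV0 : 0 <= k^-1 by rewrite invr_ge0; lra.
have kV1 := le_trans invk_le_mode mode_le1.
have w1 : w <= 1 by apply: powR_le1; lra.
have S1 : 1 <= S by have := powR_ge0 d r; nra.
have lnS : (S - 1) / k <= ln S.
  apply: le_trans (subr_inv_le_ln (lt_le_trans ltr01 S1)).
  rewrite -[1 - S^-1](_ : (S - 1) / S = _); last by field; apply/eqP; lra.
  by rewrite ler_wpM2l ?subr_ge0 // lef_pV2 ?posrE //; lra.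
have -> : (1 - w) / (k * (1 - r)) * d `^ r = (1 - r)^-1 * ((1 - w) * d `^ r / k).
  by field; apply/andP; split; apply/eqP; lra.
have r'0 : 0 <= (1 - r)^-1 by rewrite invr_ge0; lra.
rewrite ler_wpM2l //; apply: le_trans lnS.
by rewrite ler_wpM2r // invr_ge0; lra.
Qed.

Lemma shannon_ge : 2^-1 * (d * (1 - ln d)) <= - \sum_x p x * ln (p x).
Proof.
have /andP[d_le _] := min_entropy_bounds.
have le_ln_mode : \sum_x p x * ln (p x) <= ln (p o).
  rewrite -[ln (p o)]mul1r -p_sum1 mulr_suml; apply: ler_sum => x _.
  by apply: ler_wpM2l; [exact: ltW | rewrite ler_ln ?posrE].
have le_d_ln_d : \sum_(x | x != o) p x * ln (p x) <= d * ln d.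
  rewrite -{1}sum_off_mode mulr_suml; apply: ler_sum => x xo.
  have px0 := p_gt0 x; have pxd := le_off_mode xo.
  by apply: ler_wpM2l; [exact: ltW | rewrite ler_ln ?posrE ?(lt_le_trans px0 pxd)].
have mode_ln_le0 : p o * ln (p o) <= 0.
  by rewrite mulr_ge0_le0 ?ln_le0 ?mode_le1 //; apply: ltW.
rewrite (bigD1 o) //= in le_ln_mode *; rewrite mulrBr mulr1; lra.
Qed.

Lemma shannon_le : - \sum_x p x * ln (p x) <= (k + 1) * (d * (1 - ln d)).
Proof.
have mode_ge : p o - 1 <= p o * ln (p o) := subr1_le_mul_ln (p_gt0 o).
(* for [x != o]: [ln (d / p x) <= d / p x - 1] *)
have off_ge : d * ln d - k * d <= \sum_(x | x != o) p x * ln (p x).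
  apply: le_trans (_ : \sum_(x | x != o) (p x * ln d - d) <= _).
    by rewrite sumrB -mulr_suml sum_off_mode lerD2l lerN2 sum_off_mode_cst ?off_mode_ge0.
  apply: ler_sum => x xo; have px0 := p_gt0 x; have pxd := le_off_mode xo.
  have dpx0 : 0 < d / p x by rewrite divr_gt0 // (lt_le_trans px0 pxd).
  have := ln_le_subr1 dpx0; rewrite ln_div ?posrE ?(lt_le_trans px0 pxd) // => lnd.
  have : p x * (ln d - ln (p x)) <= p x * (d / p x - 1) by rewrite ler_pM2l.
  by rewrite mulrBr mulrBr mulr1 mulrCA mulfV ?gt_eqF // mulr1; lra.
have k0 : 0 <= k by have := card_ge1; lra.
have dlnd : 0 <= k * (d * - ln d).
  by rewrite mulr_ge0 ?mulr_ge0 ?off_mode_ge0 // oppr_ge0 ln_le0 // (ltW off_mode_lt1).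
rewrite mulrN in dlnd; rewrite (bigD1 o) //=.
have : (k + 1) * (d * (1 - ln d)) = k * d - k * (d * ln d) + d - d * ln d.
  by ring.
rewrite /d in off_ge dlnd *; lra.
Qed.

End renyi_mode_bounds.

Section renyi_scale.
Context {R : realType}.
Implicit Types (x y rho B : R) (a : \bar R).

Definition shannon_scale x := x * (1 - ln x).

Definition renyi_scale a x : R :=
  match a with
  | (r%:E)%E => if r == 1 then shannon_scale x else if r < 1 then x `^ r else x
  | _ => x
  end.

Definition renyi_exponent a : R :=
  match a with
  | (r%:E)%E => if r == 1 then 2^-1 else if r < 1 then r else 1
  | _ => 1
  end.

Lemma renyi_exponent_gt0 a : (0 < a)%E -> 0 < renyi_exponent a.
Proof.
case: a => [r|_|//] //=; rewrite lte_fin => r0.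
by case: eqP => _; [rewrite invr_gt0 | case: ifP].
Qed.

Lemma renyi_exponent_le1 a : renyi_exponent a <= 1.
Proof.
case: a => [r||] //=; case: eqP => _; first by rewrite invf_le1 // ler1n.
by case: ifP => // /ltW.
Qed.

Lemma shannon_scale_gt0 {y} : 0 < y -> y <= 1 -> 0 < shannon_scale y.
Proof. by move=> y0 y1; rewrite mulr_gt0 // subr_gt0 (le_lt_trans (ln_le0 y1)). Qed.

Lemma shannon_scale_ge0 {x} : 0 <= x -> x <= 1 -> 0 <= shannon_scale x.
Proof.
rewrite le_eqVlt => /predU1P[<-|x0] x1; first by rewrite /shannon_scale mul0r.
exact: ltW (shannon_scale_gt0 x0 x1).
Qed.

Lemma renyi_scale_gt0 a {y} : 0 < y -> y <= 1 -> 0 < renyi_scale a y.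
Proof.
case: a => [r||] //= y0 y1; case: eqP => _; first exact: shannon_scale_gt0.
by case: ifP => _ //; rewrite powR_gt0.
Qed.

Lemma renyi_scale_ge0 a {x} : 0 <= x -> x <= 1 -> 0 <= renyi_scale a x.
Proof.
case: a => [r||] //= x0 x1; case: eqP => _; first exact: shannon_scale_ge0.
by case: ifP => _ //; rewrite powR_ge0.
Qed.

Lemma envelopes_bound g rho z : 0 <= rho -> z = rho \/ z = rho `^ g ->
  2^-1 * minpow g rho <= z <= 3 * maxpow g rho.
Proof.
move=> rho0 z_rho; have [m1 m2] := minpow_ub g rho; have [M1 M2] := maxpow_lb g rho.
have := minpow_ge0 g rho0; have := powR_ge0 rho g.
by case: z_rho => ->; lra.
Qed.

(* in [shannon_scale_ratio] below, [B = 1 - ln y] and [rho = x / y] *)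
Lemma shannon_ratio_le1 rho B : 0 < rho <= 1 -> 1 <= B ->
  2^-1 * minpow 2^-1 rho <= rho * (B - ln rho) / B <= 3 * maxpow 2^-1 rho.
Proof.
move=> /andP[rho0 rho1] B1; have B0 : 0 < B by lra.
set t := rho `^ 2^-1; have t0 : 0 < t by rewrite powR_gt0.
have tt : t * t = rho by rewrite /t powR12_sqrt -?expr2 ?sqr_sqrtr // ltW.
have [m1 _] := minpow_ub 2^-1 rho; have [M1 M2] := maxpow_lb 2^-1 rho.
have L0 : ln rho <= 0 by rewrite ln_le0.
apply/andP; split.
  rewrite ler_pdivlMr //; apply: (@le_trans _ _ (rho * B)).
    by rewrite ler_pM2r //; have := minpow_ge0 2^-1 (ltW rho0); lra.
  by rewrite ler_pM2l //; lra.
(* [- rho ln rho = 2 t (- t ln t) <= 2 t (1 - t)] *)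
have rhoL : - (rho * ln rho) <= 2 * t * (1 - t).
  have -> : rho * ln rho = 2 * t * (t * ln t) by rewrite -tt lnM ?posrE //; ring.
  rewrite -mulrN ler_pM2l ?mulr_gt0 //; have := subr1_le_mul_ln t0; lra.
have tB : 2 * t <= 2 * t * B by rewrite ler_pMr ?mulr_gt0.
have : (rho + 2 * t) * B <= 3 * maxpow 2^-1 rho * B.
  by rewrite -/t in M2; rewrite ler_pM2r //; lra.
rewrite ler_pdivrMr //; have : 0 <= t * t by rewrite mulr_ge0 // ltW.
rewrite mulrDl mulrBr; lra.
Qed.

Lemma shannon_ratio_gt1 rho B : 1 < rho -> 1 + ln rho <= B ->
  2^-1 * minpow 2^-1 rho <= rho * (B - ln rho) / B <= 3 * maxpow 2^-1 rho.
Proof.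
move=> rho1 B_ge; have rho0 : 0 < rho by lra.
have L0 : 0 <= ln rho by rewrite ln_ge0 // ltW.
have B0 : 0 < B by lra.
set t := rho `^ 2^-1; have t0 : 0 < t by rewrite powR_gt0.
have tt : t * t = rho by rewrite /t powR12_sqrt -?expr2 ?sqr_sqrtr // ltW.
have lnt : ln rho = 2 * ln t by rewrite -tt lnM ?posrE //; ring.
have [_ m2] := minpow_ub 2^-1 rho; have [M1 _] := maxpow_lb 2^-1 rho.
apply/andP; split; last first.
  rewrite ler_pdivrMr //; apply: (@le_trans _ _ (rho * B)).
    by rewrite ler_pM2l //; lra.
  by rewrite ler_pM2r //; lra.
rewrite ler_pdivlMr // -/t in m2 *.
have t1 : 1 <= t.
  by rewrite leNgt; apply/negP => t1; have := ltr_pM (ltW t0) (ltW t0) t1 t1; lra.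
(* [2 rho (B - ln rho) - t B] is a sum of nonnegative terms *)
have h1 : 0 <= t * ((2 * t - 1) * (B - 2 * ln t - 1)).
  by apply: mulr_ge0; [exact: ltW | apply: mulr_ge0; lra].
have h2 : 0 <= t * (t - 1 - ln t).
  by apply: mulr_ge0; [exact: ltW | have := ln_le_subr1 t0; lra].
have -> : rho * (B - ln rho) = 2^-1 * (t * B + (t * ((2 * t - 1) * (B - 2 * ln t - 1))
    + 2 * (t * (t - 1 - ln t)) + t)) by rewrite lnt -tt; field.
rewrite -mulrA ler_pM2l ?invr_gt0 //.
have : minpow 2^-1 rho * B <= t * B by rewrite ler_pM2r.
lra.
Qed.

Lemma shannon_scale_ratio x y : 0 <= x <= 1 -> 0 < y <= 1 ->
  2^-1 * minpow 2^-1 (x / y) <= shannon_scale x / shannon_scale y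
    <= 3 * maxpow 2^-1 (x / y).
Proof.
move=> /andP[x0 x1] /andP[y0 y1]; move: x0; rewrite le_eqVlt => /predU1P[<-|x0].
  rewrite /shannon_scale !mul0r /minpow /maxpow powR0 ?invr_neq0 ?pnatr_eq0 //.
  by rewrite minxx maxxx !mulr0 lexx.
set rho := x / y; have rho0 : 0 < rho by rewrite divr_gt0.
have B1 : 1 <= 1 - ln y by have := ln_le0 y1; lra.
have lnx : ln x = ln rho + ln y by rewrite -lnM ?posrE // /rho mulrVK ?unitfE ?gt_eqF.
have -> : shannon_scale x / shannon_scale y = rho * (1 - ln y - ln rho) / (1 - ln y).
  rewrite /shannon_scale lnx {1}(_ : x = rho * y) ?/rho ?mulrVK ?unitfE ?gt_eqF //.
  by field; rewrite gt_eqF //; lra.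
have [rho1|rho1] := leP rho 1; first by apply: shannon_ratio_le1; rewrite ?rho0.
by apply: shannon_ratio_gt1; have := ln_le0 x1; lra.
Qed.

Lemma renyi_scale_ratio {a x y} : (0 < a)%E -> 0 <= x <= 1 -> 0 < y <= 1 ->
  2^-1 * minpow (renyi_exponent a) (x / y) <= renyi_scale a x / renyi_scale a y
    <= 3 * maxpow (renyi_exponent a) (x / y).
Proof.
move=> a0 x01 /andP[y0 y1]; have /andP[x0 _] := x01.
have xy0 : 0 <= x / y by rewrite divr_ge0 // ltW.
case: a a0 => [r _|_|//] /=; last by apply: envelopes_bound => //; left.
case: eqP => _; first by apply: shannon_scale_ratio; rewrite ?y0.
case: ifP => _; last by apply: envelopes_bound => //; left.
apply: envelopes_bound => //; right.
have yr0 : y `^ r != 0 by rewrite gt_eqF ?powR_gt0.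
by apply: (mulIf yr0); rewrite -powRM ?divfK ?gt_eqF ?powR_gt0 //; apply: ltW.
Qed.

End renyi_scale.

Section renyi_bounds.
Context {R : realType}.

Lemma bigmax_mode {O : finType} {p : O -> R} {o : O} :
  (forall x, 0 <= p x) -> (forall x, p x <= p o) -> \big[Num.max/0]_x p x = p o.
Proof.
move=> p0 p_mode; apply: le_anti; rewrite le_bigmax andbT.
by apply: bigmax_le => // x _.
Qed.

Definition renyi_scale_bounds (K : nat) (a : \bar R) (lo hi : R) :=
  forall (O : finType) (p : O -> R) (o : O),
    (forall x, 0 < p x) -> \sum_x p x = 1 -> (forall x, p x <= p o) ->
    (#|O| <= K)%N ->
    lo * renyi_scale a (1 - p o) <= renyi p a <= hi * renyi_scale a (1 - p o).

Lemma renyi_bounds (K : nat) (a : \bar R) : (0 < K)%N -> (0 < a)%E ->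
  exists lo hi : R, [/\ 0 < lo, 0 < hi & renyi_scale_bounds K a lo hi].
Proof.
move=> K0; have k1 : 1 <= (K%:R : R) by rewrite ler1n.
case: a => [r||//]; last first.
  move=> _; exists 1, K%:R; split; [exact: ltr01 | lra |] => O p o p0 p1 p_mode cO.
  rewrite /renyi /= mul1r (bigmax_mode (fun x => ltW (p0 x)) p_mode).
  exact: min_entropy_bounds.
rewrite lte_fin => r0; have [->|r_neq1] := eqVneq r 1.
  exists 2^-1, (K%:R + 1); split; [by rewrite invr_gt0 | lra |] => O p o p0 p1 p_mode cO.
  by rewrite /renyi /= eqxx; apply/andP; split;
    [exact: shannon_ge | exact: shannon_le].
have [r1|r1] := ltrP r 1.
  set th := 1 - (1 - (K%:R)^-1) `^ (1 - r).
  have th0 : 0 < th.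
    have kV0 : 0 < (K%:R : R)^-1 by rewrite invr_gt0; lra.
    have kV1 : (K%:R : R)^-1 <= 1 by rewrite invf_le1; lra.
    by rewrite subr_gt0; apply: powR_lt1; lra.
  exists (th / (K%:R * (1 - r))), (K%:R / (1 - r)); split.
  - by rewrite divr_gt0 // mulr_gt0; lra.
  - by rewrite divr_gt0; lra.
  move=> O p o p0 p1 p_mode cO; rewrite /renyi /= (negPf r_neq1) r1.
  have r01 : 0 < r < 1 by rewrite r0 r1.
  by apply/andP; split; [apply: renyi_lt1_ge | apply: renyi_lt1_le].
have {}r1 : 1 < r by rewrite lt_neqAle eq_sym r_neq1.
exists 1, (r / (r - 1) * K%:R); split; first exact: ltr01.
  by rewrite mulr_gt0 ?divr_gt0; lra.
move=> O p o p0 p1 p_mode cO; rewrite /renyi /= (negPf r_neq1) ltNge (ltW r1) /= mul1r.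
exact: renyi_gt1_bounds.
Qed.

End renyi_bounds.

Lemma sum_card_preimage (N : nat) (O : finType) (F : 'I_N -> O) :
  (\sum_x #|[set a | F a == x]|)%N = N.
Proof.
rewrite -[RHS]card_ord -sum1_card (partition_big F xpredT) //=.
by apply: eq_bigr => x _; rewrite -sum1_card; apply: eq_bigl => a; rewrite inE.
Qed.

Section siso_program.
Context {R : realType} {O : nat -> finType} {F : forall N, 'I_N -> O N}.
Hypothesis F_siso : siso_program F.
Context {N : nat}.
Hypothesis N_gt0 : (0 < N)%N.

Lemma out_dist_gt0 x : 0 < out_dist R (F N) x.
Proof.
rewrite divr_gt0 ?ltr0n //; apply/card_gt0P.
by have [a Fa] := F_siso N N_gt0 x; exists a; rewrite inE Fa.
Qed.

Lemma out_dist_sum1 : \sum_x out_dist R (F N) x = 1.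
Proof. by rewrite -mulr_suml -natr_sum sum_card_preimage mulfV // pnatr_eq0 -lt0n. Qed.

Lemma card_le_supp_size {K} : (supp_size (out_dist R (F N)) <= K)%N -> (#|O N| <= K)%N.
Proof.
congr (_ <= _)%N; apply: eq_card => x; rewrite !inE.
by rewrite gt_eqF ?out_dist_gt0.
Qed.

Lemma out_dist_mode : exists o, forall x, out_dist R (F N) x <= out_dist R (F N) o.
Proof.
have [o _ max_o] := @eq_bigmax _ _ _ 0 (F N (Ordinal N_gt0)) xpredT
  (out_dist R (F N)) isT (fun x _ => ltW (out_dist_gt0 x)).
by exists o => x; rewrite -max_o le_bigmax.
Qed.

Lemma off_mode_gt0 o : (1 < #|O N|)%N -> 0 < 1 - out_dist R (F N) o.
Proof.
have p_gt0 := out_dist_gt0; have p_sum1 := out_dist_sum1.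
case/card_gt1P=> [w [w' [_ _ w_w']]]; have [<-|w_o] := eqVneq w o.
  by rewrite (lt_le_trans (p_gt0 w')) // (le_off_mode _ _ _ p_gt0 p_sum1) // eq_sym.
by rewrite (lt_le_trans (p_gt0 w)) // (le_off_mode _ _ _ p_gt0 p_sum1).
Qed.

Lemma leakage_off_mode_bounds {K a lo hi} :
  (supp_size (out_dist R (F N)) <= K)%N -> renyi_scale_bounds K a lo hi ->
  exists o, let d := 1 - out_dist R (F N) o in
  [/\ \big[Num.max/0]_x out_dist R (F N) x = out_dist R (F N) o, 0 <= d <= 1
    & lo * renyi_scale a d <= leakage F a N <= hi * renyi_scale a d].
Proof.
move=> supp_K H_bounds; have p_gt0 := out_dist_gt0; have p_sum1 := out_dist_sum1.
have [o p_mode] := out_dist_mode; exists o; split.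
- exact: bigmax_mode (fun x => ltW (p_gt0 x)) p_mode.
- by rewrite (off_mode_ge0 _ _ o p_gt0 p_sum1) gerBl ltW.
- exact: H_bounds p_gt0 p_sum1 p_mode (card_le_supp_size supp_K).
Qed.

End siso_program.

Lemma ratio_bounds {R : realType} {lo hi h1 h2 u v : R} :
  0 < lo -> 0 < hi -> 0 <= u -> 0 < v ->
  lo * u <= h1 <= hi * u -> lo * v <= h2 <= hi * v ->
  lo / hi * (u / v) <= h1 / h2 <= hi / lo * (u / v).
Proof.
move=> lo0 hi0 u0 v0 /andP[h1_ge h1_le] /andP[h2_ge h2_le].
have h20 : 0 < h2 by apply: lt_le_trans h2_ge; rewrite mulr_gt0.
have lou0 : 0 <= lo * u by rewrite mulr_ge0 // ltW.
apply/andP; split.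
  have -> : lo / hi * (u / v) = lo * u / (hi * v) by field; rewrite !gt_eqF.
  apply: (@le_trans _ _ (lo * u / h2)); last by rewrite ler_pM2r ?invr_gt0.
  by rewrite ler_wpM2l // lef_pV2 ?posrE ?mulr_gt0.
have -> : hi / lo * (u / v) = hi * u / (lo * v) by field; rewrite !gt_eqF.
apply: (@le_trans _ _ (hi * u / h2)); first by rewrite ler_pM2r ?invr_gt0.
have hiu0 : 0 <= hi * u by rewrite mulr_ge0 // ltW.
by rewrite ler_wpM2l // lef_pV2 ?posrE ?mulr_gt0.
Qed.

Section leakage_ratio.
Context {R : realType} {O1 O2 : nat -> finType}
  {F1 : forall N, 'I_N -> O1 N} {F2 : forall N, 'I_N -> O2 N}.
Hypotheses (F1_siso : siso_program F1) (F2_siso : siso_program F2)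
  (F1_fin : finite_order R F1) (F2_fin : finite_order R F2)
  (O2_card : exists N0, forall N, (N0 <= N)%N -> (2 <= #|O2 N|)%N).

Definition off_mode_ratio N : R :=
  (1 - \big[Num.max/0]_x out_dist R (F1 N) x) /
  (1 - \big[Num.max/0]_x out_dist R (F2 N) x).

Lemma leakage_ratio_sandwich a : (0 < a)%E ->
  pow_sandwich (fun N => leakage F1 a N / leakage F2 a N) off_mode_ratio.
Proof.
move=> a0; have [K1 K1_supp] := F1_fin; have [K2 K2_supp] := F2_fin.
have [N0 O2_ge2] := O2_card; set K := maxn 1 (maxn K1 K2).
have [lo [hi [lo0 hi0 H_bounds]]] := @renyi_bounds R K a (leq_maxl 1 _) a0.
exists (lo / hi * 2^-1), (hi / lo * 3), (renyi_exponent a); split.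
- by rewrite mulr_gt0 ?divr_gt0.
- by rewrite mulr_gt0 ?divr_gt0.
- by rewrite renyi_exponent_gt0 ?renyi_exponent_le1.
exists (maxn N0 1) => // N; rewrite /= geq_max => /andP[N0N N_gt0].
have supp1 : (supp_size (out_dist R (F1 N)) <= K)%N.
  by apply: leq_trans (K1_supp N N_gt0) _; rewrite !leq_max leqnn orbT.
have supp2 : (supp_size (out_dist R (F2 N)) <= K)%N.
  by apply: leq_trans (K2_supp N N_gt0) _; rewrite !leq_max leqnn !orbT.
have [o1 [max1 x01 H1]] := leakage_off_mode_bounds F1_siso N_gt0 supp1 H_bounds.
have [o2 [max2 /andP[_ y1] H2]] := leakage_off_mode_bounds F2_siso N_gt0 supp2 H_bounds.
have y0 : 0 < 1 - out_dist R (F2 N) o2 := off_mode_gt0 F2_siso N_gt0 o2 (O2_ge2 N N0N).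
have /andP[x0 x1] := x01; have y01 : 0 < 1 - out_dist R (F2 N) o2 <= 1 by rewrite y0.
have /andP[scale_ge scale_le] := renyi_scale_ratio a0 x01 y01.
have /andP[H_ge H_le] := ratio_bounds lo0 hi0 (renyi_scale_ge0 a x0 x1)
  (renyi_scale_gt0 a y0 y1) H1 H2.
have lohi0 : 0 <= lo / hi by rewrite divr_ge0 // ltW.
have hilo0 : 0 <= hi / lo by rewrite divr_ge0 // ltW.
rewrite /off_mode_ratio max1 max2; split; first by rewrite divr_ge0 // ltW.
  by apply: le_trans H_ge; rewrite -[lo / hi * _ * _]mulrA ler_wpM2l.
by apply: le_trans H_le _; rewrite -[hi / lo * _ * _]mulrA ler_wpM2l.
Qed.

End leakage_ratio.

Lemma ex_order_range_iff {R : realType} (P : \bar R -> Prop) (Q : Prop) :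
  (forall a, order_range a -> (P a <-> Q)) ->
  ((exists a, order_range a /\ P a) <-> (forall b, order_range b -> P b)).
Proof.
move=> PQ; split=> [[a [a0 /(PQ a a0) Q_]] b b0|P_]; first exact/(PQ b b0).
by exists +oo%E; split; [exact: ltry | apply: P_; exact: ltry].
Qed.

Theorem proposition2 (R : realType)
  (O1 O2 : nat -> finType)
  (F1 : forall N, 'I_N -> O1 N) (F2 : forall N, 'I_N -> O2 N) :
  siso_program F1 -> siso_program F2 ->
  finite_order R F1 -> finite_order R F2 ->
  (exists N0, forall N, (N0 <= N)%N -> (2 <= #|O2 N|)%N) ->
  let f := ratio_limsup (R := R) F1 F2 in
  let g := ratio_liminf (R := R) F1 F2 in
  [/\ ((exists a, order_range a /\ f a = 0%E) <->
         (forall b, order_range b -> f b = 0%E)),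
      ((exists a, order_range a /\ f a = +oo%E) <->
         (forall b, order_range b -> f b = +oo%E)) &
      ((exists a, order_range a /\ (0 < f a < +oo)%E) <->
         (forall b, order_range b -> (0 < f b < +oo)%E))]
  /\
  [/\ ((exists a, order_range a /\ g a = 0%E) <->
         (forall b, order_range b -> g b = 0%E)),
      ((exists a, order_range a /\ g a = +oo%E) <->
         (forall b, order_range b -> g b = +oo%E)) &
      ((exists a, order_range a /\ (0 < g a < +oo)%E) <->
         (forall b, order_range b -> (0 < g b < +oo)%E))].
Proof.
move=> F1_siso F2_siso F1_fin F2_fin O2_card f g.
have sandwich := leakage_ratio_sandwich F1_siso F2_siso F1_fin F2_fin O2_card.
split; split; apply: ex_order_range_iff => a /sandwich s_rho.
- exact: sandwich_limn_esup_eq0 s_rho.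
- exact: sandwich_limn_esup_eqy s_rho.
- exact: sandwich_limn_esup_fin_gt0 s_rho.
- exact: sandwich_limn_einf_eq0 s_rho.
- exact: sandwich_limn_einf_eqy s_rho.
- exact: sandwich_limn_einf_fin_gt0 s_rho.
Qed.
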